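(* Let $T$ be a tree with at least two vertices. Then $$F(T)=\frac{1}{2}\sum_{v\in V(T)} F(T_v).$$
   Context: For a finite undirected graph $G=(V,E)$, a shelling of $G$ is a total ordering $\sigma(1),\ldots,\sigma(|E|)$ of $E$ such that for every $k$ the edges $\sigma(1),\ldots,\sigma(k)$ form a connected subgraph; $F(G)$ is the number of shellings of $G$. For a vertex $v$ of a tree $T$, $T_v$ denotes $T$ rooted at $v$, a shelling of $T_v$ is a shelling $\sigma$ of $T$ whose first edge $\sigma(1)$ is incident to $v$, and $F(T_v)$ is the number of shellings of $T_v$. *)

From mathcomp Require Import all_boot all_order all_algebra.
Set Implicit Arguments. Unset Strict Implicit. Unset Printing Implicit Defensive.

Section Graphs.
Variable (T : finType) (e : rel T).

Definition simple_graph : Prop := symmetric e /\ irreflexive e.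

Definition edges : {set {set T}} :=
  [set s : {set T} | [exists x, exists y, e x y && (s == [set x; y])]].

Definition graph_connected : Prop := forall x y : T, connect e x y.

Definition acyclic : Prop :=
  forall c : seq T, uniq c -> 3 <= size c -> ~~ cycle e c.

Definition is_tree : Prop := simple_graph /\ graph_connected /\ acyclic.

Definition edges_connected (S : seq {set T}) : bool :=
  [forall x, forall y,
     ((x \in \bigcup_(s <- S) s) && (y \in \bigcup_(s <- S) s)) ==>
     connect [rel a b | [set a; b] \in S] x y].

Definition is_shelling (s : seq {set T}) : bool :=
  perm_eq s (enum edges) &&
  [forall k : 'I_(size s).+1, (0 < k) ==> edges_connected (take k s)].

(* F(G): number of shellings (permutations of enum edges is duplicate-free
   and lists every ordering of the edges exactly once). *)
Definition F : nat := count is_shelling (permutations (enum edges)).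

(* F(T_v): shellings whose first edge is incident to v. *)
Definition F_root (v : T) : nat :=
  count (fun s => is_shelling s && (v \in head set0 s))
        (permutations (enum edges)).

End Graphs.

From mathcomp Require Import all_boot all_order all_algebra.
Import GRing.Theory.
Local Open Scope ring_scope.

(* Double counting: the first edge of every shelling has exactly two
   endpoints, so summing F(T_v) over all vertices v counts every shelling
   twice.  A tree on at least two vertices has an edge, so shellings are
   nonempty and do have a first edge. *)

Lemma sum_count_mem_head (T : finType) (P : pred (seq {set T}))
    (l : seq (seq {set T})) :
  (\sum_(v : T) count (fun s => P s && (v \in head set0 s)) l
    = \sum_(s <- l | P s) #|head set0 s|)%N.
Proof.
under eq_bigr do rewrite -sum1_count big_mkcond.
rewrite exchange_big [RHS]big_mkcond /=; apply: eq_bigr => s _.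
case: (P s) => /=.
- by rewrite -sum1_card [RHS]big_mkcond.
- by rewrite big1.
Qed.

Section Edges.
Variables (T : finType) (e : rel T).

Lemma card_edge {A : {set T}} : irreflexive e -> A \in edges e -> #|A| = 2.
Proof.
move=> irr_e; rewrite inE => /existsP [x /existsP [y /andP [exy /eqP ->]]].
by rewrite cards2; case: eqP exy => [-> | //]; rewrite irr_e.
Qed.

Lemma connected_edges_neq0 : graph_connected e -> (1 < #|T|)%N -> edges e != set0.
Proof.
move=> conn /card_gt1P [x [y [_ _ neq_xy]]].
have /connectP [[|z p] /= path_p last_p] := conn x y.
  by rewrite last_p eqxx in neq_xy.
apply/set0Pn; exists [set x; z]; rewrite inE; apply/existsP; exists x.
by apply/existsP; exists z; rewrite eqxx andbT; case/andP: path_p.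
Qed.

Lemma shelling_head_edge {s : seq {set T}} :
  edges e != set0 -> is_shelling e s -> head set0 s \in edges e.
Proof.
case/set0Pn=> A A_edge /andP [/perm_mem mem_s _].
case: s mem_s => [|B s] mem_s /=; last by rewrite -mem_enum -mem_s mem_head.
by have := mem_s A; rewrite mem_enum A_edge in_nil.
Qed.

Lemma sum_F_root : irreflexive e -> edges e != set0 ->
  (\sum_(v : T) F_root e v = 2 * F e)%N.
Proof.
move=> irr_e edges_e; rewrite /F_root sum_count_mem_head /F -sum1_count big_distrr.
by apply: eq_bigr => s /(shelling_head_edge edges_e)/(card_edge irr_e) ->.
Qed.

End Edges.

Theorem proposition3p6 (T : finType) (e : rel T) :
  is_tree e -> (1 < #|T|)%N ->
  (F e)%:R = (1 / 2 : rat) * \sum_(v : T) ((F_root e v)%:R : rat).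
Proof.
move=> [[_ irr_e] [conn_e _]] card_T.
rewrite -natr_sum sum_F_root ?connected_edges_neq0 // natrM.
by rewrite mulrA mul1r mulVf // mul1r.
Qed.
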